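(* Consider the two-sided GTRS $$\min_{\bm x \in \mathbb{R}^n} \left\{ \bm x^{\top} \bm Q_0 \bm x + \bm q_0^{\top} \bm x + b : b_1^l\le \bm x^{\top} \bm Q_1 \bm x + \bm q_1^{\top} \bm x \le b_1^u \right\},$$ written in matrix form as $\min_{\bm X\in\mathcal{X}}\{\langle \bm A_0,\bm X\rangle : b_1^l\le\langle \bm A_1,\bm X\rangle\le b_1^u,\ X_{11}=1\}$ with $\mathcal{X}:=\{\bm X\in \mathbb{S}_+^{n+1}: \operatorname{rank}(\bm X)\le 1\}$, $\bm A_0 = \begin{pmatrix} b & \bm q_0^{\top}/2\\ \bm q_0/2 & \bm Q_0\end{pmatrix}$, $\bm A_1 = \begin{pmatrix} 0 & \bm q_1^{\top}/2\\ \bm q_1/2 & \bm Q_1\end{pmatrix}$. Let $$\mathcal{C}:=\left\{\bm X\in \mathbb{S}_+^{n+1}: \operatorname{rank}(\bm X)\le 1,\ X_{11}=1,\ b_1^l \le \langle\bm A_1, \bm X\rangle \le b_1^u \right\},\quad \mathcal{C}_{\mathrm{rel}}:=\left\{\bm X\in \mathbb{S}_+^{n+1}: X_{11}=1,\ b_1^l \le \langle\bm A_1, \bm X\rangle \le b_1^u \right\}$$ be the feasible sets of the problem and of its Dantzig-Wolfe relaxation. Then (i) extreme point exactness holds: every extreme point of $\mathcal{C}_{\mathrm{rel}}$ belongs to $\mathcal{C}$; (ii) if $\bm Q_1 \neq \bm 0$ and $-\infty < b_1^l \le b_1^u < +\infty$, convex hull exactness holds: $\mathcal{C}_{\mathrm{rel}}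 = \operatorname{cl}\operatorname{conv}(\mathcal{C})$.
   Context: $\bm Q_0,\bm Q_1$ are symmetric (possibly indefinite) matrices, $-\infty\le b_1^l\le b_1^u\le+\infty$, and the Dantzig-Wolfe relaxation replaces $\mathcal{X}$ by its closed convex hull $\mathbb{S}_+^{n+1}$. $\operatorname{cl}\operatorname{conv}$ denotes the closed convex hull. *)

From HB Require Import structures.
From mathcomp Require Import all_boot all_order all_algebra.
From mathcomp Require Import all_classical all_reals all_analysis.
Set Implicit Arguments. Unset Strict Implicit. Unset Printing Implicit Defensive.
Import Order.TTheory GRing.Theory Num.Theory.
Import numFieldNormedType.Exports.
Local Open Scope classical_set_scope.
Local Open Scope ring_scope.

Definition psd (R : realType) (m : nat) (X : 'M[R]_m) : Prop :=
  X^T = X /\ forall x : 'cV[R]_m, 0 <= (x^T *m X *m x) ord0 ord0.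

Definition frob (R : realType) (m : nat) (A X : 'M[R]_m) : R := \tr (A^T *m X).

Definition A1mx (R : realType) (n : nat) (Q1 : 'M[R]_n) (q1 : 'cV[R]_n)
  : 'M[R]_(1 + n) :=
  block_mx (0 : 'M[R]_1) ((2%:R)^-1 *: q1^T) ((2%:R)^-1 *: q1) Q1.

Definition Cset (R : realType) (n : nat) (Q1 : 'M[R]_n) (q1 : 'cV[R]_n)
  (bl bu : \bar R) : set 'M[R]_(1 + n) :=
  [set X | psd X /\ (\rank X <= 1)%N /\ X ord0 ord0 = 1 /\
     (bl <= (frob (A1mx Q1 q1) X)%:E)%E /\ ((frob (A1mx Q1 q1) X)%:E <= bu)%E].

Definition Crel (R : realType) (n : nat) (Q1 : 'M[R]_n) (q1 : 'cV[R]_n)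
  (bl bu : \bar R) : set 'M[R]_(1 + n) :=
  [set X | psd X /\ X ord0 ord0 = 1 /\
     (bl <= (frob (A1mx Q1 q1) X)%:E)%E /\ ((frob (A1mx Q1 q1) X)%:E <= bu)%E].

Definition extreme_point (R : realType) (m : nat) (S : set 'M[R]_m) (X : 'M[R]_m)
  : Prop :=
  S X /\ forall (Y Z : 'M[R]_m) (t : R), S Y -> S Z -> 0 < t -> t < 1 ->
    X = t *: Y + (1 - t) *: Z -> Y = X /\ Z = X.

Definition conv_hull (R : realType) (m : nat) (S : set 'M[R]_m) : set 'M[R]_m :=
  [set X | exists (k : nat) (w : 'I_k -> R) (P : 'I_k -> 'M[R]_m),
     (forall i, 0 <= w i) /\ \sum_(i < k) w i = 1 /\ (forall i, S (P i)) /\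
     X = \sum_(i < k) w i *: P i].

(* Every X in the relaxation is a sum of rank-one terms w w^T on which the
   quadratic form of A_1 equals <A_1, X> w_0^2: split X into rank-one terms by
   symmetric Gaussian elimination, then apply the Sturm-Zhang rank-one
   decomposition to A_1 - <A_1, X> E_00, which vanishes on X. A term with w_0
   <> 0, rescaled to w_0 = 1, is a feasible rank-one point with the same value
   <A_1, .> as X, and X is a proper convex combination of it and another point
   of the relaxation, so an extreme point is rank one. The terms with w_0 = 0
   are isotropic directions. When Q_1 <> 0 some e with e_0 = 0 has e^T A_1 e
   <> 0; for a feasible rank-one u u^T the points p = u + w / s + (r / s) e,
   with r solving a quadratic equation so that p^T A_1 p = u^T A_1 u, are
   feasible, and for s, r -> 0 the convex combinations (1 - s^2) Z + s^2 p p^T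
   tend to Z + w w^T. Hence the relaxation lies in the closed convex hull of
   C; conversely, with finite bounds the relaxation is closed and convex. *)

From HB Require Import structures.
From mathcomp Require Import all_boot all_order all_algebra.
From mathcomp Require Import all_classical all_reals all_analysis.
From mathcomp Require Import ring lra.
Set Implicit Arguments. Unset Strict Implicit. Unset Printing Implicit Defensive.
Import Order.TTheory GRing.Theory Num.Theory.
Import numFieldNormedType.Exports.
Local Open Scope classical_set_scope.
Local Open Scope ring_scope.

Section BilinearForm.
Variables (R : comPzRingType) (m : nat).
Implicit Types (B X : 'M[R]_m) (a b c w x : 'cV[R]_m).

Definition bf B a b : R := (a^T *m B *m b) ord0 ord0.
Definition qf B a : R := bf B a a.

Lemma bfDl B a b c : bf B (a + b) c = bf B a c + bf B b c.
Proof. by rewrite /bf linearD /= !mulmxDl mxE. Qed.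

Lemma bfDr B a b c : bf B a (b + c) = bf B a b + bf B a c.
Proof. by rewrite /bf !mulmxDr mxE. Qed.

Lemma bfZl B k a b : bf B (k *: a) b = k * bf B a b.
Proof. by rewrite /bf linearZ /= -!scalemxAl mxE. Qed.

Lemma bfZr B k a b : bf B a (k *: b) = k * bf B a b.
Proof. by rewrite /bf -!scalemxAr mxE. Qed.

Lemma bfBl B a b c : bf B (a - b) c = bf B a c - bf B b c.
Proof. by rewrite bfDl -scaleN1r bfZl mulN1r. Qed.

Lemma bfBr B a b c : bf B a (b - c) = bf B a b - bf B a c.
Proof. by rewrite bfDr -scaleN1r bfZr mulN1r. Qed.

Lemma bfC B a b : B^T = B -> bf B a b = bf B b a.
Proof.
move=> sB; rewrite /bf -[in RHS](trmxK (b^T *m B *m a)) [in RHS]mxE.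
by rewrite !trmx_mul trmxK sB mulmxA.
Qed.

Lemma bf_delta B i j : bf B (delta_mx i ord0) (delta_mx j ord0) = B i j.
Proof. by rewrite /bf trmx_delta -rowE -colE !mxE. Qed.

Lemma oprodE a b i j : (a *m b^T) i j = a i ord0 * b j ord0.
Proof. by rewrite mxE big_ord1 mxE. Qed.

Lemma qf_oprod w x : qf (w *m w^T) x = (x^T *m w) ord0 ord0 ^+ 2.
Proof.
rewrite /qf /bf !mulmxA -(mulmxA (x^T *m w)) mxE big_ord1 expr2; congr (_ * _).
by rewrite -[w^T *m x]trmxK mxE trmx_mul trmxK.
Qed.

Lemma qf_expand B u w e (s r : R) :
  qf B (u + s *: w + r *: e) = qf B u + s * (bf B u w + bf B w u)
    + r * (bf B u e + bf B e u) + s * r * (bf B w e + bf B e w)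
    + r ^+ 2 * qf B e + s ^+ 2 * qf B w.
Proof. by rewrite /qf !bfDl !bfDr !bfZl !bfZr; ring. Qed.

End BilinearForm.

Lemma continuous_sum (T : topologicalType) (R : numFieldType) (I : Type)
    (r : seq I) (F : I -> T -> R) :
  (forall i, continuous (F i)) -> continuous (fun x => \sum_(i <- r) F i x).
Proof.
move=> cF x; elim: r => [|i r IH].
  by under eq_fun do rewrite big_nil; exact: cst_continuous.
by under eq_fun do rewrite big_cons; exact: (continuousD (cF i x) IH).
Qed.

Section Frobenius.
Variables (R : realType) (m : nat).
Implicit Types (B X Y : 'M[R]_m) (w x : 'cV[R]_m).

Lemma frobE B X : frob B X = \sum_i \sum_j B i j * X i j.
Proof.
rewrite /frob /mxtrace exchange_big; apply: eq_bigr => i _; rewrite mxE.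
by apply: eq_bigr => j _; rewrite mxE.
Qed.

Lemma frobD B X Y : frob B (X + Y) = frob B X + frob B Y.
Proof. by rewrite /frob mulmxDr mxtraceD. Qed.

Lemma frobZ B k X : frob B (k *: X) = k * frob B X.
Proof. by rewrite /frob -scalemxAr mxtraceZ. Qed.

Lemma frobB B X Y : frob B (X - Y) = frob B X - frob B Y.
Proof. by rewrite frobD -scaleN1r frobZ mulN1r. Qed.

Lemma frob_sum B (I : Type) (r : seq I) (P : pred I) (F : I -> 'M[R]_m) :
  frob B (\sum_(i <- r | P i) F i) = \sum_(i <- r | P i) frob B (F i).
Proof.
apply: (big_morph (frob B) (frobD B)).
by rewrite /frob mulmx0 mxtrace0.
Qed.

Lemma frobBl B1 B2 X : frob (B1 - B2) X = frob B1 X - frob B2 X.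
Proof. by rewrite /frob linearB /= mulmxBl linearB. Qed.

Lemma frobZl k B X : frob (k *: B) X = k * frob B X.
Proof. by rewrite /frob linearZ /= -scalemxAl mxtraceZ. Qed.

Lemma frob_delta i j X : frob (delta_mx i j) X = X i j.
Proof.
rewrite frobE (bigD1 i) //= (bigD1 j) //= !big1 => [|k /negbTE ki|k /negbTE kj].
- by rewrite mxE !eqxx mul1r !addr0.
- by apply: big1 => l _; rewrite mxE ki mul0r.
- by rewrite mxE eqxx kj mul0r.
Qed.

Lemma frob_oprod B w : frob B (w *m w^T) = qf B w.
Proof.
rewrite /frob mulmxA mxtrace_mulC /qf /bf /mxtrace big_ord1.
by rewrite -[in RHS](trmxK (w^T *m B *m w)) [in RHS]mxE !trmx_mul trmxK mulmxA.
Qed.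

Lemma qf_frob X x : qf X x = frob (x *m x^T) X.
Proof.
rewrite frobE /qf /bf mxE; under eq_bigr do rewrite mxE big_distrl.
rewrite exchange_big; apply: eq_bigr => i _; apply: eq_bigr => j _.
by rewrite !mxE big_ord1 !mxE /= mulrAC.
Qed.

Lemma continuous_frob B : continuous (frob B).
Proof.
have -> : frob B = fun Y => \sum_i \sum_j B i j * Y i j.
  by apply/funext => Y; rewrite frobE.
apply: continuous_sum => i; apply: continuous_sum => j Y.
exact: (continuousM (@cst_continuous _ _ _ _) (@coord_continuous _ _ _ i j Y)).
Qed.

End Frobenius.

Section Psd.
Variables (R : realType) (m : nat).
Implicit Types (X Y : 'M[R]_m) (w x : 'cV[R]_m).

Lemma psd0 : psd (0 : 'M[R]_m).
Proof. by split=> [|x]; rewrite ?trmx0 // mulmx0 mul0mx mxE. Qed.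

Lemma psdD X Y : psd X -> psd Y -> psd (X + Y).
Proof.
move=> [sX pX] [sY pY]; split=> [|x]; first by rewrite linearD /= sX sY.
change (0 <= qf (X + Y) x); rewrite qf_frob frobD -!qf_frob.
exact: addr_ge0 (pX x) (pY x).
Qed.

Lemma psdZ k X : 0 <= k -> psd X -> psd (k *: X).
Proof.
move=> k0 [sX pX]; split=> [|x]; first by rewrite linearZ /= sX.
change (0 <= qf (k *: X) x); rewrite qf_frob frobZ -qf_frob.
exact: mulr_ge0 k0 (pX x).
Qed.

Lemma psd_sum (I : Type) (r : seq I) (P : pred I) (F : I -> 'M[R]_m) :
  (forall i, P i -> psd (F i)) -> psd (\sum_(i <- r | P i) F i).
Proof. by move=> PF; apply: big_ind => //; [exact: psd0 | exact: psdD]. Qed.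

Lemma psd_oprod w : psd (w *m w^T).
Proof.
split=> [|x]; first by rewrite trmx_mul trmxK.
by rewrite -/(bf _ x x) -/(qf _ x) qf_oprod sqr_ge0.
Qed.

Lemma psd_diag_ge0 X i : psd X -> 0 <= X i i.
Proof. by move=> [_ pX]; rewrite -bf_delta; apply: pX. Qed.

Lemma psd_col_eq0 X i j : psd X -> X j j = 0 -> X i j = 0.
Proof.
move=> pX Xjj; have [sX qX] := pX; have Xii := psd_diag_ge0 i pX.
have Xji : X j i = X i j by rewrite -{1}sX mxE.
set s := - X i j / (X i i + 1).
have := qX (s *: delta_mx i ord0 + delta_mx j ord0).
rewrite -/(bf _ _ _) bfDl !bfDr !bfZl !bfZr !bf_delta Xjj Xji => q_ge0.
have : 0 <= (X i i + 1) ^+ 2 * (s * (s * X i i) + s * X i j + (s * X i j + 0)).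
  by rewrite mulr_ge0 ?sqr_ge0.
have -> : (X i i + 1) ^+ 2 * (s * (s * X i i) + s * X i j + (s * X i j + 0))
    = - X i j ^+ 2 * (X i i + 2) by rewrite /s; field; lra.
by move=> h; apply/eqP; rewrite -sqrf_eq0 eq_le sqr_ge0 andbT; nra.
Qed.

Definition pivot_col X j : 'cV[R]_m := (Num.sqrt (X j j))^-1 *: col j X.

Lemma oprod_pivot_colE X j i l : 0 <= X j j ->
  (pivot_col X j *m (pivot_col X j)^T) i l = X i j * X l j / X j j.
Proof.
move=> Xjj; rewrite oprodE !mxE -[in RHS](sqr_sqrtr Xjj) expr2 invfM; ring.
Qed.

Lemma psd_sub_pivot X j : psd X -> 0 < X j j ->
  psd (X - pivot_col X j *m (pivot_col X j)^T).
Proof.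
move=> pX Xjj; have [sX qX] := pX; set ej : 'cV[R]_m := delta_mx j ord0.
split=> [|x]; first by rewrite linearB /= trmx_mul trmxK sX.
rewrite -/(bf _ x x) -/(qf _ x) qf_frob frobB -!qf_frob qf_oprod /pivot_col colE.
rewrite -scalemxAr mxE mulmxA -/(bf X x ej) exprMn exprVn sqr_sqrtr ?(ltW Xjj) //.
set t := bf X x ej / X j j.
have := qX (x - t *: ej); rewrite -/(bf _ _ _) !bfBl !bfBr !bfZl !bfZr bf_delta.
rewrite (bfC ej x sX) /t => /le_trans; apply; rewrite le_eqVlt; apply/orP; left.
by apply/eqP; rewrite /qf; field; rewrite gt_eqF.
Qed.

Lemma psd_sum_oprod X : psd X ->
  exists ws : seq 'cV[R]_m, X = \sum_(w <- ws) w *m w^T.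
Proof.
suff: forall k X, psd X -> (forall i j : 'I_m, (k <= j)%N -> X i j = 0) ->
    exists ws : seq 'cV[R]_m, X = \sum_(w <- ws) w *m w^T.
  by move=> /(_ m X) + pX; apply=> // i j; rewrite leqNgt ltn_ord.
elim=> [|k IH] {}X pX Xk.
  by exists [::]; rewrite big_nil; apply/matrixP => i j; rewrite mxE Xk.
have [km|mk] := ltnP k m; last first.
  by apply: IH => // i j /(leq_trans mk); rewrite leqNgt ltn_ord.
pose j0 := Ordinal km.
have col_k (j : 'I_m) : (k <= j)%N -> j = j0 \/ (k.+1 <= j)%N.
  by rewrite leq_eqVlt => /orP[/eqP kj|]; [left; apply: val_inj|right].
have [Xj0|Xj0] := eqVneq (X j0 j0) 0.
  apply: IH => // i j /col_k[->|]; [exact: psd_col_eq0 | exact: Xk].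
have Xj0_gt0 : 0 < X j0 j0 by rewrite lt0r Xj0 psd_diag_ge0.
set w := pivot_col X j0.
have [ws Xws] : exists ws : seq 'cV[R]_m, X - w *m w^T = \sum_(v <- ws) v *m v^T.
  apply: IH => [|i j /col_k[->|kj]]; first exact: psd_sub_pivot.
    by rewrite 2!mxE /w oprod_pivot_colE ?ltW //; field; rewrite gt_eqF.
  have [sX _] := pX; have Xjj0 : X j j0 = 0 by rewrite -sX mxE Xk.
  by rewrite 2!mxE /w oprod_pivot_colE ?ltW // (Xk i j kj) Xjj0 mulr0 mul0r subr0.
by exists (w :: ws); rewrite big_cons -Xws addrC subrK.
Qed.

End Psd.

Lemma sumr_lt0_has (R : realDomainType) (I : eqType) (r : seq I) (F : I -> R) :
  \sum_(i <- r) F i < 0 -> has (fun i => F i < 0) r.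
Proof.
apply: contraTT => /hasPn F_ge0; rewrite -leNgt big_seq sumr_ge0 // => i /F_ge0.
by rewrite -leNgt.
Qed.

Section IsotropicDecomposition.
Variables (R : realType) (m : nat) (B : 'M[R]_m).
Implicit Types (a b u v w : 'cV[R]_m).

Lemma qf_oprod_sum a b u v : u *m u^T + v *m v^T = a *m a^T + b *m b^T ->
  qf B u + qf B v = qf B a + qf B b.
Proof. by move=> uvE; rewrite -!frob_oprod -!frobD uvE. Qed.

Lemma oprod_pair_isotropic a b : qf B a * qf B b < 0 ->
  exists u v, u *m u^T + v *m v^T = a *m a^T + b *m b^T /\ qf B u = 0.
Proof.
move=> qab; set qa := qf B a in qab *; set qb := qf B b in qab *.
have qb_neq0 : qb != 0 by apply: contraTneq qab => ->; rewrite mulr0 ltxx.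
set be := (bf B a b + bf B b a) / 2.
set s := Num.sqrt (be ^+ 2 - qa * qb).
have s2 : s ^+ 2 = be ^+ 2 - qa * qb by rewrite sqr_sqrtr // subr_ge0; nra.
(* [t] is a root of [qb t^2 + 2 be t + qa], i.e. [qf B (a + t b) = 0]; the
   normalized rotation below preserves [a a^T + b b^T]. *)
set t := (s - be) / qb.
have qt : qa + t * (bf B a b + bf B b a) + t ^+ 2 * qb = 0.
  apply: (mulfI qb_neq0); rewrite mulr0.
  have -> : qb * (qa + t * (bf B a b + bf B b a) + t ^+ 2 * qb) =
    s ^+ 2 - (be ^+ 2 - qa * qb) by rewrite /t /be; field.
  by rewrite s2 subrr.
set c := (Num.sqrt (1 + t ^+ 2))^-1.
have c2 : c ^+ 2 * (1 + t ^+ 2) = 1.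
  by rewrite exprVn sqr_sqrtr ?mulVf //; nra.
exists (c *: (a + t *: b)), (c *: (b - t *: a)); split.
  apply/matrixP => i j; rewrite !(oprodE, mxE).
  by rewrite -[RHS]mul1r -c2; ring.
rewrite /qf !(bfZl, bfZr, bfDl, bfDr) -/(qf B a) -/(qf B b) -/qa -/qb.
by rewrite -[RHS](mulr0 (c ^+ 2)) -qt; ring.
Qed.

Lemma isotropic_oprod_decomposition (ws : seq 'cV[R]_m) :
  \sum_(w <- ws) qf B w = 0 ->
  exists2 vs : seq 'cV[R]_m, \sum_(v <- vs) v *m v^T = \sum_(w <- ws) w *m w^T
    & forall v, v \in vs -> qf B v = 0.
Proof.
have [k] := ubnP (size ws); elim: k ws => // k IH [|w ws] szk sum0.
  by exists [::] => // v; rewrite in_nil.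
rewrite big_cons in sum0.
have [qw0|qw_neq0] := eqVneq (qf B w) 0.
  have [|vs vsE vs0] := IH ws szk; first by rewrite qw0 add0r in sum0.
  exists (w :: vs); first by rewrite !big_cons vsE.
  by move=> v; rewrite in_cons => /orP[/eqP->|/vs0].
have /hasP[b b_in qwb] : has (fun b => qf B w * qf B b < 0) ws.
  apply: sumr_lt0_has; rewrite -mulr_sumr.
  have -> : \sum_(x <- ws) qf B x = - qf B w by apply/eqP; rewrite -addr_eq0 addrC sum0.
  by rewrite mulrN oppr_lt0 -expr2 exprn_even_gt0.
have [u [v [uvE qu0]]] := oprod_pair_isotropic qwb.
have := qf_oprod_sum uvE; rewrite qu0 add0r => qv.
have [||vs vsE vs0] := IH (v :: rem b ws).
- by rewrite /= size_rem // prednK //; case: (ws) b_in.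
- by rewrite big_cons qv -addrA; move: sum0; rewrite (big_rem _ b_in).
exists (u :: vs).
  by rewrite !big_cons vsE big_cons addrA uvE (big_rem _ b_in) addrA.
by move=> x; rewrite in_cons => /orP[/eqP->|/vs0].
Qed.

End IsotropicDecomposition.

Lemma closure_sub_preimage (T U : topologicalType) (f : T -> U) (S : set T) (D : set U) :
  continuous f -> closed D -> S `<=` f @^-1` D -> closure S `<=` f @^-1` D.
Proof.
move=> cf cD SD; have cfD : closed (f @^-1` D).
  by apply: preimage_closed => // x _; exact: cf.
by rewrite [X in _ `<=` X](closure_id _).1 //; exact: closureS.
Qed.

Lemma closure_approx (R : numFieldType) (V : normedModType R) (S : set V) (x : V) :
  (forall e : R, 0 < e -> exists2 z, S z & `|x - z| < e) -> closure S x.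
Proof.
move=> near_x B /nbhs_ballP[e /= e_gt0 eB].
have [z Sz xz] := near_x e e_gt0.
by exists z; split => //; apply: eB; rewrite -ball_normE.
Qed.

Lemma norm_sum_scale_le (R : numDomainType) (V : normedModType R)
    (r : seq (R * V)) (d : R) :
  all (fun x => `|x.1| <= d) r ->
  `|\sum_(x <- r) x.1 *: x.2| <= d * \sum_(x <- r) `|x.2|.
Proof.
elim: r => [|[k v] r IH] /=; first by rewrite !big_nil normr0 mulr0.
move=> /andP[kd /IH rd]; rewrite !big_cons mulrDr.
apply: le_trans (ler_normD _ _) _; apply: lerD => //.
by rewrite normrZ ler_wpM2r.
Qed.

Section ConvexHull.
Variables (R : realType) (m : nat).
Implicit Types (S : set 'M[R]_m) (Z P : 'M[R]_m).

Lemma conv_hull_seq S (T : eqType) (r : seq T) (w : T -> R) (P : T -> 'M[R]_m) :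
  (forall x, x \in r -> 0 <= w x) -> \sum_(x <- r) w x = 1 ->
  (forall x, x \in r -> S (P x)) -> conv_hull S (\sum_(x <- r) w x *: P x).
Proof.
case: r => [|x0 r] w_ge0 w1 SP.
  by move: w1; rewrite big_nil => /eqP; rewrite eq_sym oner_eq0.
exists (size (x0 :: r)), (fun i => w (nth x0 (x0 :: r) i)).
exists (fun i => P (nth x0 (x0 :: r) i)).
split; first by move=> i; apply: w_ge0; rewrite mem_nth.
split; first by rewrite -w1 (big_nth x0) big_mkord.
split; first by move=> i; apply: SP; rewrite mem_nth.
by rewrite (big_nth x0) big_mkord.
Qed.

Lemma conv_hull_mix S Z P mu : conv_hull S Z -> S P -> 0 <= mu <= 1 ->
  conv_hull S ((1 - mu) *: Z + mu *: P).
Proof.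
move=> [k [w [Q [w_ge0 [w1 [SQ ->]]]]]] SP /andP[mu_ge0 mu_le1].
pose r := None :: map Some (enum 'I_k).
pose w' o := if o is Some i then (1 - mu) * w i else mu.
pose Q' o := if o is Some i then Q i else P.
have -> : (1 - mu) *: \sum_i w i *: Q i + mu *: P = \sum_(o <- r) w' o *: Q' o.
  rewrite big_cons big_map big_enum /= addrC scaler_sumr; congr (_ + _).
  by apply: eq_bigr => i _; rewrite scalerA.
apply: conv_hull_seq => [[i|] _ //=||[i|] _ //=].
  by rewrite mulr_ge0 ?subr_ge0.
by rewrite big_cons big_map big_enum /= -mulr_sumr w1 mulr1 addrC subrK.
Qed.

End ConvexHull.

Section QuadraticRoots.
Variable R : rcfType.

Lemma quadratic_root_le (a b c : R) : a != 0 -> a * c <= 0 ->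
  exists r, a * r ^+ 2 + b * r + c = 0 /\ r ^+ 2 <= - c / a.
Proof.
move=> a_neq0 ac_le0; set k := - c / a.
have k_ge0 : 0 <= k.
  have -> : k = - (a * c) / a ^+ 2 by rewrite /k; field.
  by rewrite divr_ge0 ?sqr_ge0 ?oppr_ge0.
set q := Num.sqrt (b ^+ 2 - 4 * a * c).
have q2 : q ^+ 2 = b ^+ 2 - 4 * a * c by rewrite sqr_sqrtr //; nra.
have a2_neq0 : 2 * a != 0 by rewrite mulf_neq0 ?pnatr_eq0.
have root r : (2 * a * r + b) ^+ 2 = q ^+ 2 -> a * r ^+ 2 + b * r + c = 0.
  move=> rq; apply: (@mulfI _ (4 * a)); first by rewrite mulf_neq0 ?pnatr_eq0.
  have -> : 4 * a * (a * r ^+ 2 + b * r + c) = (2 * a * r + b) ^+ 2 - q ^+ 2.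
    by rewrite q2; ring.
  by rewrite rq subrr mulr0.
pose r1 := (q - b) / (2 * a); pose r2 := (- q - b) / (2 * a).
have r1_root : a * r1 ^+ 2 + b * r1 + c = 0.
  by apply: root; rewrite /r1 mulrC divfK // addrNK.
have r2_root : a * r2 ^+ 2 + b * r2 + c = 0.
  by apply: root; rewrite /r2 mulrC divfK // addrNK sqrrN.
have r12 : r1 ^+ 2 * r2 ^+ 2 = k ^+ 2.
  rewrite -exprMn -sqrrN; congr (_ ^+ 2).
  have -> : r1 * r2 = (b ^+ 2 - q ^+ 2) / (2 * a) ^+ 2 by rewrite /r1 /r2; field.
  by rewrite q2 /k; field.
have [r1_le|r1_gt] := leP (r1 ^+ 2) k; first by exists r1.
exists r2; split => //; rewrite leNgt; apply/negP => r2_gt.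
by move: r12; apply/eqP; rewrite gt_eqF //; nra.
Qed.

Lemma quadratic_small_root (a b c h d : R) : a != 0 -> 0 < d ->
  exists sg rh : R, [/\ sg != 0, `|sg| <= d, `|rh| <= d &
    c / sg + (b + h / sg) * (rh / sg) + a * (rh / sg) ^+ 2 = 0].
Proof.
move=> a_neq0 d_gt0; have a_gt0 : 0 < `|a| by rewrite normr_gt0.
set g := `|c| / `|a|; have g_ge0 : 0 <= g by rewrite divr_ge0.
set T := d^-1 + g / d ^+ 2.
have dT : d^-1 <= T by rewrite lerDl divr_ge0 ?sqr_ge0.
have T_gt0 : 0 < T by apply: lt_le_trans dT; rewrite invr_gt0.
have gT : g <= T * d ^+ 2.
  rewrite mulrDl divfK ?expf_neq0 ?gt_eqF // -subr_ge0 addrK.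
  by rewrite mulr_ge0 ?invr_ge0 ?sqr_ge0 ?ltW.
(* the sign of [s] makes [a * (s * c)] nonpositive, so a real root [t] exists *)
pose s := if 0 <= a * c then - T else T.
have sT : `|s| = T by rewrite /s; case: ifP; rewrite ?normrN gtr0_norm.
have s_neq0 : s != 0 by rewrite -normr_eq0 sT gt_eqF.
have asc : a * (s * c) = - (T * `|a * c|).
  by rewrite /s; case: lerP => [/ger0_norm|/ltr0_norm] ->; ring.
have [|t [t_root t2]] := @quadratic_root_le a (b + s * h) (s * c) a_neq0.
  by rewrite asc oppr_le0 mulr_ge0 // ltW.
have tg : t ^+ 2 <= T * g.
  apply: (le_trans t2); rewrite le_eqVlt; apply/orP; left; apply/eqP.
  have a2 : a ^+ 2 = `|a| ^+ 2 by rewrite real_normK ?num_real.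
  have -> : - (s * c) / a = - (a * (s * c)) / a ^+ 2 by field.
  by rewrite asc opprK normrM a2 /g; field; rewrite gt_eqF.
exists s^-1, (t / s); split.
- by rewrite invr_eq0.
- by rewrite normfV sT -[d]invrK lef_pV2 ?posrE ?invr_gt0.
- rewrite -(@ler_pXn2r _ 2) ?nnegrE ?(ltW d_gt0) // real_normK ?num_real //.
  rewrite expr_div_n -(real_normK (num_real s)) sT ler_pdivrMr ?exprn_gt0 //.
  by nra.
- by rewrite invrK divfK // !mulrA -t_root; ring.
Qed.

End QuadraticRoots.

Lemma qf_sym_eq0 (R : numDomainType) (m : nat) (B : 'M[R]_m) :
  B^T = B -> (forall x, qf B x = 0) -> B = 0.
Proof.
move=> sB qB0; apply/matrixP => i j; rewrite mxE.
have := qB0 (delta_mx i ord0 + delta_mx j ord0).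
rewrite /qf bfDl !bfDr !bf_delta -[B i i]bf_delta -[B j j]bf_delta.
rewrite -!/(qf _ _) !qB0 add0r addr0 -{2}sB mxE.
by move/eqP; rewrite -mulr2n mulrn_eq0 /= => /eqP.
Qed.

Lemma qf_col_mx0 (R : comPzRingType) (m1 m2 : nat) (A : 'M[R]_m1) (Bm : 'M[R]_(m1, m2))
    (C : 'M[R]_(m2, m1)) (D : 'M[R]_m2) (x : 'cV[R]_m2) :
  qf (block_mx A Bm C D) (col_mx 0 x) = qf D x.
Proof.
by rewrite /qf /bf tr_col_mx trmx0 mul_row_block mul_row_col !mul0mx !add0r mulmx0 add0r.
Qed.

Section Dehomogenize.
Variables (R : realType) (m : nat).
Implicit Types (B X : 'M[R]_m.+1) (w : 'cV[R]_m.+1).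

Lemma psd_proportional_decomposition B X : psd X -> X ord0 ord0 = 1 ->
  exists2 ws : seq 'cV[R]_m.+1, X = \sum_(w <- ws) w *m w^T
    & forall w, w \in ws -> qf B w = frob B X * w ord0 ord0 ^+ 2.
Proof.
move=> pX X00; set c := frob B X; set B' := B - c *: delta_mx ord0 ord0.
have qB' w : qf B' w = qf B w - c * w ord0 ord0 ^+ 2.
  by rewrite -!frob_oprod frobBl frobZl frob_delta oprodE expr2.
have [ws0 Xws0] := psd_sum_oprod pX.
have [|ws wsE ws_iso] := @isotropic_oprod_decomposition _ _ B' ws0.
  under eq_bigr do rewrite -frob_oprod.
  by rewrite -frob_sum -Xws0 frobBl frobZl frob_delta X00 mulr1 subrr.
exists ws; first by rewrite wsE.
by move=> w /ws_iso; rewrite qB' => /eqP; rewrite subr_eq0 => /eqP.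
Qed.

Definition dehomogenize w := (w ord0 ord0)^-1 *: w.

Lemma dehomogenize00 w : w ord0 ord0 != 0 -> dehomogenize w ord0 ord0 = 1.
Proof. by move=> w0; rewrite mxE mulVf. Qed.

Lemma qf_dehomogenize B w : qf B (dehomogenize w) = qf B w / w ord0 ord0 ^+ 2.
Proof. by rewrite /qf bfZl bfZr expr2 invfM; ring. Qed.

Lemma oprod_dehomogenize w : w ord0 ord0 != 0 ->
  w ord0 ord0 ^+ 2 *: (dehomogenize w *m (dehomogenize w)^T) = w *m w^T.
Proof.
move=> w0; rewrite linearZ /= -scalemxAl -scalemxAr !scalerA.
by rewrite expr2 mulfK // mulfV // scale1r.
Qed.

End Dehomogenize.

Section ClosureConstraints.
Variables (R : realType) (m : nat) (S : set 'M[R]_m).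

Lemma closure_frob B (D : set R) : closed D ->
  (forall Z, S Z -> D (frob B Z)) -> forall X, closure S X -> D (frob B X).
Proof. by move=> cD SD; apply: closure_sub_preimage cD SD; exact: continuous_frob. Qed.

Lemma closure_psd : S `<=` @psd R m -> closure S `<=` @psd R m.
Proof.
move=> Spsd X clX; split=> [|x].
  apply/matrixP => i j; rewrite mxE; apply/eqP; rewrite -subr_eq0 -!frob_delta -frobBl.
  apply/eqP; apply: (closure_frob (@closed_eq _ 0) _ clX) => Z /Spsd[sZ _] /=.
  by rewrite frobBl !frob_delta -{1}sZ mxE subrr.
change (0 <= qf X x); rewrite qf_frob.
apply: (closure_frob (@closed_ge _ 0) _ clX) => Z /Spsd[_ qZ] /=.
by rewrite -qf_frob; apply: qZ.
Qed.

End ClosureConstraints.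

Section Relaxation.
Variables (R : realType) (n : nat) (Q1 : 'M[R]_n) (q1 : 'cV[R]_n) (bl bu : \bar R).
Local Notation A := (A1mx Q1 q1).
Local Notation C := (Cset Q1 q1 bl bu).
Local Notation Cr := (Crel Q1 q1 bl bu).
Implicit Types (X Y Z T : 'M[R]_(1 + n)) (u w e : 'cV[R]_(1 + n)).

Lemma Cset_sub_Crel : C `<=` Cr.
Proof. by move=> X [pX [_ CrX]]. Qed.

Lemma Crel_frob_eq X Y : Cr X -> psd Y -> Y ord0 ord0 = 1 -> frob A Y = frob A X -> Cr Y.
Proof. by move=> [_ [_ bX]] pY Y00 YX; rewrite /Crel /= YX. Qed.

Lemma Cset_oprod u : u ord0 ord0 = 1 ->
  (bl <= (qf A u)%:E)%E -> ((qf A u)%:E <= bu)%E -> C (u *m u^T).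
Proof.
move=> u0 ul uu; split; first exact: psd_oprod.
split; first exact: leq_trans (mxrankM_maxl _ _) (rank_leq_col u).
by rewrite oprodE u0 mulr1 frob_oprod.
Qed.

Lemma Cset_dehomogenize X w : Cr X -> w ord0 ord0 != 0 ->
  qf A w = frob A X * w ord0 ord0 ^+ 2 ->
  C (dehomogenize w *m (dehomogenize w)^T).
Proof.
move=> [_ [_ [lX uX]]] w0 qw; apply: Cset_oprod; first exact: dehomogenize00.
all: by rewrite qf_dehomogenize qw mulfK ?expf_neq0.
Qed.

Lemma extreme_point_Crel_Cset X : extreme_point Cr X -> C X.
Proof.
move=> [CrX Xext]; have [pX [X00 _]] := CrX.
have [ws Xws qws] := psd_proportional_decomposition A pX X00.
have sum1 : \sum_(w <- ws) w ord0 ord0 ^+ 2 = 1.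
  by rewrite -X00 Xws summxE; apply: eq_bigr => w _; rewrite oprodE expr2.
have := @psumr_neq0 _ _ ws xpredT (fun w => w ord0 ord0 ^+ 2) (fun w _ => sqr_ge0 _).
rewrite sum1 oner_neq0 => /esym/hasP[w w_in /= w0_gt0].
have w0 : w ord0 ord0 != 0 by rewrite -sqrf_eq0 gt_eqF.
set Y := dehomogenize w *m (dehomogenize w)^T.
have CY : C Y := Cset_dehomogenize CrX w0 (qws w w_in).
have YX : frob A Y = frob A X.
  by rewrite frob_oprod qf_dehomogenize qws // mulfK ?expf_neq0.
have w0_le1 : w ord0 ord0 ^+ 2 <= 1.
  by rewrite -sum1 (big_rem _ w_in) /= lerDl sumr_ge0 // => v _; exact: sqr_ge0.
(* Split half of the term w w^T off X: X = t Y + (1 - t) Z with t = w_0^2 / 2. *)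
set t := w ord0 ord0 ^+ 2 / 2.
have t1 : 1 - t != 0 by rewrite subr_eq0 eq_sym lt_eqF // /t; lra.
set Z := (1 - t)^-1 *: (X - t *: Y).
have CrZ : Cr Z.
  apply: (Crel_frob_eq CrX).
  - apply: psdZ; first by rewrite invr_ge0 /t; lra.
    have -> : X - t *: Y = 2^-1 *: (w *m w^T) + \sum_(v <- rem w ws) v *m v^T.
      rewrite Xws (big_rem _ w_in) /= /t mulrC -scalerA oprod_dehomogenize //.
      by rewrite addrAC -{1}[w *m w^T]scale1r -scalerBl; congr (_ *: _ + _); field.
    apply: psdD; first by apply: psdZ; [lra | exact: psd_oprod].
    by apply: psd_sum => v _; exact: psd_oprod.
  - by rewrite 4!mxE X00 oprodE dehomogenize00 // !mulr1 mulVf.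
  - by rewrite frobZ frobB frobZ YX; field.
have t_gt0 : 0 < t by rewrite /t divr_gt0.
have t_lt1 : t < 1 by rewrite /t; lra.
have Xt : X = t *: Y + (1 - t) *: Z by rewrite /Z scalerA mulfV // scale1r addrC subrK.
by have [<- _] := Xext Y Z t (Cset_sub_Crel CY) CrZ t_gt0 t_lt1 Xt.
Qed.

Lemma exists_anisotropic_direction : Q1^T = Q1 -> Q1 != 0 ->
  exists2 e : 'cV[R]_(1 + n), e ord0 ord0 = 0 & qf A e != 0.
Proof.
move=> sQ Q1_neq0; have [x qx] : exists x : 'cV[R]_n, qf Q1 x <> 0.
  by apply/existsNP => qQ0; move/eqP: Q1_neq0; apply; exact: qf_sym_eq0.
exists (col_mx 0 x); last by rewrite qf_col_mx0; apply/eqP.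
have -> : (ord0 : 'I_n.+1) = lshift n (ord0 : 'I_1) by exact: val_inj.
by rewrite col_mxEu mxE.
Qed.

Lemma conv_hull_add_isotropic_closure e u w Z :
  e ord0 ord0 = 0 -> qf A e != 0 -> u ord0 ord0 = 1 -> C (u *m u^T) ->
  w ord0 ord0 = 0 -> qf A w = 0 -> conv_hull C Z ->
  closure (conv_hull C) (Z + w *m w^T).
Proof.
move=> e0 qe u0 Cu w0 qw convZ; apply: closure_approx => eps eps_gt0.
pose M := [:: u *m u^T - Z; u *m w^T + w *m u^T; u *m e^T + e *m u^T;
              w *m e^T + e *m w^T; e *m e^T].
set K := \sum_(N <- M) `|N|.
have K_ge0 : 0 <= K by rewrite sumr_ge0.
set d := Num.min 1 (eps / (K + 1)).
have d_gt0 : 0 < d by rewrite lt_min ltr01 divr_gt0 //; lra.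
have d_le1 : d <= 1 by rewrite ge_min lexx.
have dK : d * K < eps.
  apply: (@le_lt_trans _ _ (eps / (K + 1) * K)).
    by rewrite ler_wpM2r // ge_min lexx orbT.
  by rewrite mulrAC ltr_pdivrMr ?ltr_pM2l //; lra.
have [sg [rh [sg_neq0 sgd rhd root]]] := quadratic_small_root
  (bf A u e + bf A e u) (bf A u w + bf A w u) (bf A w e + bf A e w) qe d_gt0.
(* p is feasible with the value of u, and sg^2 p p^T = sg^2 u u^T + w w^T + O(d) *)
set p := u + sg^-1 *: w + (rh / sg) *: e.
have Cp : C (p *m p^T).
  have [_ [_ [_ [lu uu]]]] := Cu; rewrite frob_oprod in lu uu.
  have qp : qf A p = qf A u by rewrite qf_expand qw mulr0 addr0 -[RHS]addr0 -root; ring.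
  by apply: Cset_oprod; rewrite ?qp // !mxE u0 w0 e0; ring.
have sg2 : 0 <= sg ^+ 2 <= 1.
  rewrite sqr_ge0 -(real_normK (num_real sg)) expr2 /=.
  by apply: mulr_ile1; rewrite ?normr_ge0 //; apply: le_trans d_le1.
exists ((1 - sg ^+ 2) *: Z + sg ^+ 2 *: (p *m p^T)); first exact: conv_hull_mix.
have -> : Z + w *m w^T - ((1 - sg ^+ 2) *: Z + sg ^+ 2 *: (p *m p^T)) =
    - \sum_(x <- zip [:: sg ^+ 2; sg; sg * rh; rh; rh ^+ 2] M) x.1 *: x.2.
  rewrite !big_cons big_nil /=; apply/matrixP => i j; rewrite !(oprodE, mxE) /=.
  by field.
rewrite normrN; apply: le_lt_trans dK.
apply: le_trans (norm_sum_scale_le _) _; last by rewrite /K /M !big_cons !big_nil.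
have le_d x y : `|x| <= d -> `|y| <= d -> `|x * y| <= d.
  by move=> xd yd; rewrite normrM -[d]mul1r ler_pM // (le_trans xd).
by rewrite /= !expr2 !le_d ?sgd ?rhd.
Qed.

Lemma closure_conv_hull_add_isotropic e u w T :
  e ord0 ord0 = 0 -> qf A e != 0 -> u ord0 ord0 = 1 -> C (u *m u^T) ->
  w ord0 ord0 = 0 -> qf A w = 0 -> closure (conv_hull C) T ->
  closure (conv_hull C) (T + w *m w^T).
Proof.
move=> e0 qe u0 Cu w0 qw; move: T.
apply: (@closure_sub_preimage _ _ (fun X => X + w *m w^T)) (@closed_closure _ _) _.
  by move=> X; exact: (continuousD (@cvg_id _ _) (@cst_continuous _ _ _ X)).
by move=> Z; exact: conv_hull_add_isotropic_closure e0 qe u0 Cu w0 qw.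
Qed.


Lemma closure_conv_hull_add_isotropic_sum e u T (r : seq 'cV[R]_(1 + n)) :
  e ord0 ord0 = 0 -> qf A e != 0 -> u ord0 ord0 = 1 -> C (u *m u^T) ->
  (forall v, v \in r -> v ord0 ord0 = 0 -> qf A v = 0) -> closure (conv_hull C) T ->
  closure (conv_hull C) (T + \sum_(v <- r | v ord0 ord0 == 0) v *m v^T).
Proof.
move=> e0 qe u0 Cu r_iso clT; elim: r r_iso => [|v r IH] r_iso.
  by rewrite big_nil addr0.
have {}IH : closure (conv_hull C) (T + \sum_(v <- r | v ord0 ord0 == 0) v *m v^T).
  by apply: IH => x x_in; apply: r_iso; rewrite in_cons x_in orbT.
rewrite big_cons; case: ifP => [/eqP v0|_] //; rewrite addrCA addrC.
apply: (closure_conv_hull_add_isotropic e0 qe u0 Cu v0) IH.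
by apply: r_iso; rewrite ?mem_head.
Qed.

Lemma Crel_sub_closure_conv_hull : Q1^T = Q1 -> Q1 != 0 -> Cr `<=` closure (conv_hull C).
Proof.
move=> sQ Q1_neq0 X CrX; have [pX [X00 _]] := CrX.
have [e e0 qe] := exists_anisotropic_direction sQ Q1_neq0.
have [ws Xws qws] := psd_proportional_decomposition A pX X00.
pose D w := dehomogenize w *m (dehomogenize w)^T.
have CD w : w \in ws -> w ord0 ord0 != 0 -> C (D w).
  by move=> w_in w0; exact: Cset_dehomogenize CrX w0 (qws w w_in).
pose base := \sum_(w <- ws | w ord0 ord0 != 0) w ord0 ord0 ^+ 2 *: D w.
have sum1 : \sum_(w <- ws | w ord0 ord0 != 0) w ord0 ord0 ^+ 2 = 1.
  rewrite -X00 Xws summxE [RHS](bigID (fun w => w ord0 ord0 == 0)) /=.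
  rewrite [X in _ = X + _]big1 => [|w /eqP w0]; last by rewrite oprodE w0 mul0r.
  by rewrite add0r; apply: eq_bigr => w _; rewrite oprodE expr2.
have conv_base : conv_hull C base.
  rewrite /base -big_filter; apply: conv_hull_seq => [w _||w].
  - exact: sqr_ge0.
  - by rewrite big_filter.
  - by rewrite mem_filter => /andP[w0 w_in]; exact: CD.
have := @psumr_neq0 _ _ ws (fun w => w ord0 ord0 != 0) (fun w => w ord0 ord0 ^+ 2)
  (fun w _ => sqr_ge0 _).
rewrite sum1 oner_neq0 => /esym/hasP[w w_in /andP[w0 _]].
have -> : X = base + \sum_(w <- ws | w ord0 ord0 == 0) w *m w^T.
  rewrite Xws (bigID (fun w => w ord0 ord0 == 0)) addrC /=; congr (_ + _).
  by apply: eq_bigr => v v0; rewrite oprod_dehomogenize.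
apply: (closure_conv_hull_add_isotropic_sum e0 qe (dehomogenize00 w0) (CD w w_in w0)).
  by move=> v v_in v0; rewrite qws // v0 expr0n mulr0.
exact: subset_closure.
Qed.

End Relaxation.

Section FiniteBounds.
Variables (R : realType) (n : nat) (Q1 : 'M[R]_n) (q1 : 'cV[R]_n) (l r : R).
Local Notation A := (A1mx Q1 q1).
Local Notation C := (Cset Q1 q1 l%:E r%:E).
Local Notation Cr := (Crel Q1 q1 l%:E r%:E).

Lemma conv_hull_Cset_sub_Crel : conv_hull C `<=` Cr.
Proof.
move=> _ [k [w [P [w_ge0 [w1 [CP ->]]]]]].
have pP i : psd (P i) by have [] := CP i.
have P00 i : P i ord0 ord0 = 1 by have [_ [_ []]] := CP i.
have lP i : l <= frob A (P i) by have [_ [_ [_ []]]] := CP i; rewrite lee_fin.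
have uP i : frob A (P i) <= r by have [_ [_ [_ [_]]]] := CP i; rewrite lee_fin.
split; first by apply: psd_sum => i _; exact: psdZ.
split.
  by rewrite summxE -w1; apply: eq_bigr => i _; rewrite mxE P00 mulr1.
rewrite frob_sum !lee_fin; under eq_bigr do rewrite frobZ.
split; [rewrite -[l]mul1r | rewrite -[r]mul1r]; rewrite -w1 mulr_suml;
  by apply: ler_sum => i _; apply: ler_wpM2l.
Qed.

Lemma closure_conv_hull_Cset_sub_Crel : closure (conv_hull C) `<=` Cr.
Proof.
move=> X clX; have conv := conv_hull_Cset_sub_Crel.
split; first by apply: (closure_psd _ clX) => Z /conv[].
split.
  rewrite -frob_delta; apply: (closure_frob (@closed_eq _ 1) _ clX) => Z /conv[_ [Z00 _]].
  by rewrite /= frob_delta.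
rewrite !lee_fin; split.
  by apply: (closure_frob (@closed_ge _ l) _ clX) => Z /conv[_ [_ []]]; rewrite lee_fin.
by apply: (closure_frob (@closed_le _ r) _ clX) => Z /conv[_ [_ [_]]]; rewrite lee_fin.
Qed.

End FiniteBounds.

Theorem corollary6 (R : realType) (n : nat) (Q1 : 'M[R]_n) (q1 : 'cV[R]_n)
  (bl bu : \bar R) :
  Q1^T = Q1 -> (bl <= bu)%E ->
  (forall X : 'M[R]_(1 + n), extreme_point (Crel Q1 q1 bl bu) X -> Cset Q1 q1 bl bu X) /\
  (Q1 != 0 -> bl \is a fin_num -> bu \is a fin_num ->
     Crel Q1 q1 bl bu = closure (conv_hull (Cset Q1 q1 bl bu))).
Proof.
move=> sQ _; split=> [X|Q1_neq0]; first exact: extreme_point_Crel_Cset.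
case: bl => [l||] //; case: bu => [r||] // _ _.
apply/seteqP; split; first exact: Crel_sub_closure_conv_hull.
exact: closure_conv_hull_Cset_sub_Crel.
Qed.
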